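(* Let $m$ be a non-negative integer and $k=(m+2)^{-2}-1$. Then the identity component of the differential Galois group (over $\mathbb{C}(z)$) of the equation \[ y''+\left(\frac{2}{z}+\frac{1}{z-1}\right)y'+\left(-\frac{1}{(1+k)(z-1)^2}+\frac{1}{(1+k)z(z-1)}\right)y=0,\qquad '=\frac{d}{dz}, \] is Abelian. *)

(* The field of constants C is  R[i]  for R : realType (any realType is a
   complete archimedean ordered field, i.e. a copy of the reals, so R[i] is
   a copy of the complex numbers). *)
From mathcomp Require Import all_boot all_algebra.
From mathcomp.real_closed Require Import complex.
From mathcomp Require Import reals.

Set Implicit Arguments.
Unset Strict Implicit.
Unset Printing Implicit Defensive.
Import GRing.Theory.
Local Open Scope ring_scope.

Definition derivation (L : fieldType) (D : L -> L) : Prop :=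
  (forall x y, D (x + y) = D x + D y) /\
  (forall x y, D (x * y) = D x * y + x * D y).

Definition field_generated_by (L : fieldType) (S : L -> Prop) : Prop :=
  forall K : L -> Prop,
    K 0 -> K 1 ->
    (forall x y, K x -> K y -> K (x - y)) ->
    (forall x y, K x -> K y -> K (x * y)) ->
    (forall x, K x -> K x^-1) ->
    (forall x, S x -> K x) ->
    forall x, K x.

Definition kcoef (L : fieldType) (m : nat) : L := ((m + 2)%:R)^-2 - 1.

Definition coef_a (L : fieldType) (z : L) : L :=
  2 / z + 1 / (z - 1).

Definition coef_b (L : fieldType) (m : nat) (z : L) : L :=
  - (1 / ((1 + kcoef L m) * (z - 1) ^+ 2))
  + 1 / ((1 + kcoef L m) * z * (z - 1)).

(* (L, D) is a Picard-Vessiot extension of (C(z), d/dz) for the equation,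
   with C embedded in L by iota, z in L the variable (D z = 1), and
   y1, y2 a fundamental system of solutions:
   - D is a derivation, iota(C) consists of constants, and every constant of L
     lies in iota(C) (no new constants);
   - D z = 1;
   - y1, y2 solve the equation and their Wronskian is nonzero;
   - L is generated as a field by C, z, y1, y2, y1', y2'. *)
Definition picard_vessiot (R : realType) (m : nat) (L : fieldType)
    (D : L -> L) (iota : {rmorphism R[i] -> L}) (z y1 y2 : L) : Prop :=
  derivation D /\
  (forall c, D (iota c) = 0) /\
  (forall x, D x = 0 -> exists c, x = iota c) /\
  D z = 1 /\
  (forall y, y = y1 \/ y = y2 ->
     D (D y) + coef_a z * D y + coef_b m z * y = 0) /\
  y1 * D y2 - y2 * D y1 != 0 /\
  field_generated_by
        (fun x => (exists c, x = iota c) \/ x = z \/ x = y1 \/ x = y2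
                  \/ x = D y1 \/ x = D y2).

(* The differential Galois group: differential field automorphisms of L
   fixing C(z) (i.e. fixing iota(C) and z). *)
Definition diff_gal (R : realType) (L : fieldType) (D : L -> L)
    (iota : {rmorphism R[i] -> L}) (z : L) (s : L -> L) : Prop :=
  bijective s /\
  (forall x y, s (x + y) = s x + s y) /\
  (forall x y, s (x * y) = s x * s y) /\
  s 1 = 1 /\
  (forall x, s (D x) = D (s x)) /\
  (forall c, s (iota c) = iota c) /\
  s z = z.

Definition gal_matrix (R : realType) (L : fieldType)
    (iota : {rmorphism R[i] -> L}) (y1 y2 : L) (s : L -> L)
    (A : 'M[R[i]]_2) : Prop :=
  s y1 = iota (A 0 0) * y1 + iota (A 1 0) * y2 /\
  s y2 = iota (A 0 1) * y1 + iota (A 1 1) * y2.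

Inductive mpexpr (C : Type) : Type :=
| MPConst of C
| MPVar of 'I_2 & 'I_2
| MPAdd of mpexpr C & mpexpr C
| MPMul of mpexpr C & mpexpr C.

Fixpoint mpeval (C : nzRingType) (p : mpexpr C) (A : 'M[C]_2) : C :=
  match p with
  | MPConst c => c
  | MPVar i j => A i j
  | MPAdd p q => mpeval p A + mpeval q A
  | MPMul p q => mpeval p A * mpeval q A
  end.

Definition zariski_closed (C : nzRingType) (Z : 'M[C]_2 -> Prop) : Prop :=
  exists (I : Type) (P : I -> mpexpr C),
    forall A, Z A <-> forall i, mpeval (P i) A = 0.

(* The Zariski topology on the Galois group, transported through the
   faithful representation s |-> gal_matrix.  F is relatively closed in a
   subset H of the Galois group. *)
Definition gal_rel_closed (R : realType) (L : fieldType)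
    (iota : {rmorphism R[i] -> L}) (y1 y2 : L)
    (H F : (L -> L) -> Prop) : Prop :=
  exists Z : 'M[R[i]]_2 -> Prop, zariski_closed Z /\
    forall s, F s <-> (H s /\ exists A, gal_matrix iota y1 y2 s A /\ Z A).

Definition gal_connected (R : realType) (L : fieldType)
    (iota : {rmorphism R[i] -> L}) (y1 y2 : L) (H : (L -> L) -> Prop) : Prop :=
  forall F1 F2,
    gal_rel_closed iota y1 y2 H F1 -> gal_rel_closed iota y1 y2 H F2 ->
    (forall s, H s -> F1 s \/ F2 s) ->
    (forall s, ~ (F1 s /\ F2 s)) ->
    (forall s, ~ F1 s) \/ (forall s, ~ F2 s).

(* The identity component G^0: union of all Zariski-connected subsets of the
   Galois group containing the identity. *)
Definition gal_identity_component (R : realType) (L : fieldType)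
    (D : L -> L) (iota : {rmorphism R[i] -> L}) (z y1 y2 : L)
    (s : L -> L) : Prop :=
  exists H : (L -> L) -> Prop,
    [/\ (forall t, H t -> diff_gal D iota z t),
        H id,
        gal_connected iota y1 y2 H
      & H s].

Definition abelian_maps (L : Type) (G : (L -> L) -> Prop) : Prop :=
  forall s t, G s -> G t -> forall x, s (t x) = t (s x).

From HB Require Import structures.
From mathcomp Require Import all_boot all_algebra.
From mathcomp.real_closed Require Import complex.
From mathcomp Require Import reals.
From mathcomp Require Import ring.
Import GRing.Theory Num.Theory.

Set Implicit Arguments.
Unset Strict Implicit.
Unset Printing Implicit Defensive.

Local Open Scope ring_scope.

(* Write u = 1/(z-1).  In this variable the equation becomes
   u (1 + u) P'' + (u - 1) P' = (m+2)^2 P, whose power-series solution starting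
   at u^2 has a two-term coefficient recurrence that terminates at degree m+2.
   So r = P(u) is a nonzero solution in C(z).  By Abel's identity the Wronskian
   of two solutions is a constant multiple of 1/(z^2 (z-1)), hence also in C(z).
   Every differential automorphism s over C(z) thus fixes r and W(r, y) for a
   second solution y, which forces s y = y + l_s r with l_s constant.  Any two
   such automorphisms therefore commute on y, hence on every solution, hence on
   the field generated by the solutions: the whole Galois group is abelian. *)

Lemma deriv_eq0_polyC (F : numDomainType) (q : {poly F}) :
  q^`() = 0 -> q = (q`_0)%:P.
Proof.
move=> q'0; apply/polyP => -[|i]; rewrite coefC //=.
have /eqP := congr1 (fun p : {poly F} => p`_i) q'0.
by rewrite coef_deriv coef0 mulrn_eq0 => /eqP.
Qed.

Section Derivation.

Variables (L : fieldType) (D : L -> L).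
Hypothesis derD : derivation D.

Lemma derivationB x y : D (x - y) = D x - D y.
Proof. by apply: (addIr (D y)); rewrite -derD.1 !subrK. Qed.

#[local] HB.instance Definition _ :=
  GRing.isZmodMorphism.Build L L D derivationB.

Lemma derivationN x : D (- x) = - D x.
Proof. exact: raddfN. Qed.

Lemma derivationM x y : D (x * y) = D x * y + x * D y.
Proof. exact: derD.2. Qed.

Lemma derivation1 : D 1 = 0.
Proof.
have /esym/eqP := derivationM 1 1.
by rewrite !mulr1 !mul1r -subr_eq0 addrK => /eqP.
Qed.

Lemma derivation_neq0 x : D x != 0 -> x != 0.
Proof. by apply: contraNneq => ->; rewrite raddf0. Qed.

Lemma derivationV x : x != 0 -> D x^-1 = - D x / x ^+ 2.
Proof.
move=> x_neq0; apply: (mulfI x_neq0).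
have /esym/eqP := derivationM x x^-1; rewrite mulfV // derivation1 addr_eq0.
by move=> /eqP h; rewrite -[LHS]opprK -h; field.
Qed.

Lemma derivation_div_eq0 c x y :
  D x = c * x -> D y = c * y -> y != 0 -> D (x / y) = 0.
Proof.
by move=> Dx Dy y_neq0; rewrite derivationM derivationV // Dx Dy; field.
Qed.

Lemma derivation_horner (F : nzRingType) (iota : {rmorphism F -> L}) :
    (forall c, D (iota c) = 0) -> forall (q : {poly F}) x,
  D (map_poly iota q).[x] = (map_poly iota q^`()).[x] * D x.
Proof.
move=> Diota q x; elim/poly_ind: q => [|q c IH].
  by rewrite deriv0 !rmorph0 horner0 raddf0 mul0r.
rewrite derivMXaddC !rmorphD !rmorphM /= map_polyX map_polyC !hornerE.
by rewrite raddfD /= derivationM IH Diota; ring.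
Qed.

Lemma derivation_transcendental (F : numFieldType) (iota : {rmorphism F -> L}) :
    (forall c, D (iota c) = 0) -> forall u, D u != 0 ->
  forall q : {poly F}, root (map_poly iota q) u -> q = 0.
Proof.
move=> Diota u Du_neq0 q; have [n] := ubnP (size q).
elim: n q => [|n IHn] q //; rewrite ltnS => size_q /rootP qu0.
have [-> //|q_neq0] := eqVneq q 0.
have q'0 : q^`() = 0.
  apply: IHn; first exact: leq_trans (lt_size_deriv q_neq0) size_q.
  have := derivation_horner Diota q u; rewrite qu0 raddf0 => /esym/eqP.
  by rewrite mulf_eq0 (negbTE Du_neq0) orbF.
move: qu0; rewrite (deriv_eq0_polyC q'0) map_polyC hornerC => /eqP.
by rewrite fmorph_eq0 => /eqP ->.
Qed.

End Derivation.

Definition ode2_sol (L : fieldType) (D : L -> L) (a b y : L) : Prop :=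
  D (D y) + a * D y + b * y = 0.

Definition wronskian (L : fieldType) (D : L -> L) (f g : L) : L :=
  f * D g - g * D f.

Lemma wronskianC (L : fieldType) (D : L -> L) (f g : L) :
  wronskian D g f = - wronskian D f g.
Proof. by rewrite /wronskian opprB. Qed.

Lemma wronskian_expansion (L : fieldType) (D : L -> L) (f g h : L) :
  f * wronskian D g h = wronskian D f h * g + wronskian D g f * h.
Proof. by rewrite /wronskian; ring. Qed.

Lemma wronskian_neq0_r (L : fieldType) (D : L -> L) (r y1 y2 : L) :
  r != 0 -> wronskian D y1 y2 != 0 ->
  wronskian D r y1 != 0 \/ wronskian D r y2 != 0.
Proof.
move=> r_neq0 W12_neq0; have [W2|] := eqVneq (wronskian D r y2) 0; last by right.
left; apply: contra_neq r_neq0 => W1; apply: (mulIf W12_neq0).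
by rewrite wronskian_expansion W2 wronskianC W1 oppr0 !mul0r addr0.
Qed.

Section SecondOrderEquation.

Variables (L : fieldType) (D : L -> L) (a b : L).
Hypothesis derD : derivation D.

Local Notation sol := (ode2_sol D a b).
Local Notation W := (wronskian D).

Lemma ode2_solE y : sol y -> D (D y) = - a * D y - b * y.
Proof. by move=> sol_y; apply/eqP; rewrite -subr_eq0 -sol_y; apply/eqP; ring. Qed.

Lemma wronskian_abel f g : sol f -> sol g -> D (W f g) = - a * W f g.
Proof.
move=> /ode2_solE Df /ode2_solE Dg.
rewrite /wronskian (derivationB derD) !(derivationM derD) Df Dg; ring.
Qed.

Lemma ode2_sol_decomp f g h : sol f -> sol g -> sol h -> W g h != 0 ->
  [/\ f = W f h / W g h * g + W g f / W g h * h,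
      D (W f h / W g h) = 0 & D (W g f / W g h) = 0].
Proof.
move=> sol_f sol_g sol_h W_neq0; have Wgh := wronskian_abel sol_g sol_h.
split; first by apply: (mulIf W_neq0); rewrite wronskian_expansion; field.
  exact: derivation_div_eq0 (wronskian_abel sol_f sol_h) Wgh W_neq0.
exact: derivation_div_eq0 (wronskian_abel sol_g sol_f) Wgh W_neq0.
Qed.

End SecondOrderEquation.

Section PolynomialSolution.

Variables (F : numFieldType) (N : nat).
Hypothesis N_ge2 : (2 <= N)%N.

(* The recurrence is read off the coefficient of u^j in [sol_poly_ode]; it
   produces the factor N^2 - N^2 = 0 at j = N, so the solution is a polynomial. *)
Fixpoint sol_coef (j : nat) : F :=
  match j with
  | 0 | 1 => 0
  | 2 => 1
  | j.+1 => sol_coef j * ((N ^ 2)%:R - (j ^ 2)%:R) / (j.+1 * j.-1)%:R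
  end.

Lemma sol_coefSS j :
  sol_coef j.+3 * (j.+3 * j.+1)%:R = sol_coef j.+2 * ((N ^ 2)%:R - (j.+2 ^ 2)%:R).
Proof. by rewrite /= mulfVK // pnatr_eq0. Qed.

Lemma sol_coef_eq0 j : (N < j)%N -> sol_coef j = 0.
Proof.
elim: j => // -[_ _ //|[|j] IHj]; rewrite ltnS => N_le.
  by rewrite leqNgt N_ge2 in N_le.
rewrite /= -/(sol_coef j.+2); have [<-|N_neq] := eqVneq N j.+2.
  by rewrite subrr mulr0 mul0r.
by rewrite IHj ?mul0r // ltn_neqAle N_neq.
Qed.

Arguments sol_coef : simpl never.

Definition sol_poly : {poly F} := \poly_(j < N.+1) sol_coef j.

Lemma coef_sol_poly j : sol_poly`_j = sol_coef j.
Proof. by rewrite coef_poly; case: ltnP => // /sol_coef_eq0 ->. Qed.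

Lemma sol_poly_ode :
  'X * (1 + 'X) * sol_poly^`()^`() + ('X - 1) * sol_poly^`() = sol_poly *+ N ^ 2.
Proof.
apply/polyP => j; rewrite mulrDr mulr1 mulrBl mul1r mulrDl -mulrA.
rewrite !(coefD, coefN, coefXM, coefMn, coef_deriv, coef_sol_poly) /=.
case: j => [|[|j]] /=.
- by rewrite (_ : sol_coef 0 = 0) // (_ : sol_coef 1 = 0) //; ring.
- by rewrite (_ : sol_coef 1 = 0) // (_ : sol_coef 2 = 1) //; ring.
apply/eqP; rewrite -subr_eq0 -(subrr (sol_coef j.+3 * (j.+3 * j.+1)%:R)).
by rewrite {2}sol_coefSS; apply/eqP; ring.
Qed.

End PolynomialSolution.

Section RationalFunctions.

Variables (L : fieldType) (D : L -> L) (z : L).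
Hypotheses (derD : derivation D) (Dz : D z = 1).

Lemma var_nonsingular : z != 0 /\ z - 1 != 0.
Proof.
split; apply: (derivation_neq0 derD); first by rewrite Dz oner_neq0.
by rewrite (derivationB derD) Dz (derivation1 derD) subr0 oner_neq0.
Qed.

Lemma derivation_inv_subr1 : D (z - 1)^-1 = - (z - 1)^-1 ^+ 2.
Proof.
have [_ z1_neq0] := var_nonsingular.
rewrite (derivationV derD) // (derivationB derD) Dz (derivation1 derD) subr0.
by rewrite mulN1r -exprVn.
Qed.

Lemma abel_rational_sol :
  D (z ^+ 2 * (z - 1))^-1 = - coef_a z * (z ^+ 2 * (z - 1))^-1.
Proof.
have [z_neq0 z1_neq0] := var_nonsingular.
have Dden : D (z ^+ 2 * (z - 1)) = z *+ 2 * (z - 1) + z ^+ 2.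
  rewrite (derivationM derD) expr2 (derivationM derD) (derivationB derD) Dz.
  by rewrite (derivation1 derD); ring.
rewrite (derivationV derD) ?mulf_neq0 ?expf_neq0 // Dden /coef_a.
by field; rewrite z_neq0 z1_neq0.
Qed.

Variables (F : numFieldType) (iota : {rmorphism F -> L}) (m : nat).
Hypothesis Diota : forall c, D (iota c) = 0.

Lemma sol_poly_neq0 : (map_poly iota (sol_poly F (m + 2))).[(z - 1)^-1] != 0.
Proof.
have [_ z1_neq0] := var_nonsingular.
have Du_neq0 : D (z - 1)^-1 != 0.
  by rewrite derivation_inv_subr1 oppr_eq0 expf_neq0 ?invr_eq0.
apply/negP => /(derivation_transcendental derD Diota Du_neq0).
move=> /(congr1 (coefp 2)) /eqP; rewrite /= coef_sol_poly ?leq_addl // coef0.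
by rewrite (_ : sol_coef F _ 2 = 1) // oner_eq0.
Qed.

Lemma sol_poly_ode2_sol :
  ode2_sol D (coef_a z) (coef_b m z)
    (map_poly iota (sol_poly F (m + 2))).[(z - 1)^-1].
Proof.
have [z_neq0 z1_neq0] := var_nonsingular.
have N_neq0 : (m + 2)%:R != 0 :> L.
  by rewrite -(rmorph_nat iota) fmorph_eq0 pnatr_eq0 addn2.
have Du := derivation_inv_subr1; set u := (z - 1)^-1 in Du *.
have := congr1 (fun q => (map_poly iota q).[u]) (sol_poly_ode F (leq_addl m 2)).
rewrite /= !(rmorphD, rmorphM, rmorphN, rmorphMn, rmorph1) /= map_polyX.
rewrite !hornerE hornerMn.
move/eqP; rewrite -subr_eq0 => /eqP ode_u.
rewrite /ode2_sol (derivation_horner derD Diota) (derivationM derD _ (D u)).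
rewrite (derivation_horner derD Diota) Du (derivationN derD) expr2.
rewrite (derivationM derD u) Du.
(* In terms of u, the left-hand side is u^3 / (1 + u) times [ode_u]. *)
rewrite -[RHS](mulr0 (u ^+ 3 / (1 + u))) -ode_u /coef_a /coef_b /kcoef /u.
field; rewrite z1_neq0 subrK z_neq0 -natrD N_neq0 /=.
by rewrite mulN1r addrCA subrr addr0 oner_neq0.
Qed.

End RationalFunctions.

Lemma rmorph_commute_generated (L : fieldType) (s t : {rmorphism L -> L})
    (S : L -> Prop) :
  field_generated_by S -> (forall x, S x -> s (t x) = t (s x)) ->
  forall x, s (t x) = t (s x).
Proof.
move=> genS; apply: genS => [||x y sx sy|x y sx sy|x sx].
- by rewrite !rmorph0.
- by rewrite !rmorph1.
- by rewrite !rmorphB sx sy.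
- by rewrite !rmorphM sx sy.
- by rewrite !fmorphV sx.
Qed.

Section DifferentialGaloisGroup.

Variables (R : realType) (L : fieldType) (D : L -> L).
Variables (iota : {rmorphism R[i] -> L}) (z : L).

Lemma diff_gal_zmod_morphism s : diff_gal D iota z s -> zmod_morphism s.
Proof. by move=> [_ [sD _]] x y; apply: (addIr (s y)); rewrite -sD !subrK. Qed.

Lemma diff_gal_monoid_morphism s : diff_gal D iota z s -> monoid_morphism s.
Proof. by move=> [_ [_ [sM [s1 _]]]]. Qed.

Lemma diff_galD s x : diff_gal D iota z s -> s (D x) = D (s x).
Proof. by case=> _ [_ [_ [_ [sD _]]]]. Qed.

Lemma diff_gal_iota s c : diff_gal D iota z s -> s (iota c) = iota c.
Proof. by case=> _ [_ [_ [_ [_ []]]]]. Qed.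

Lemma diff_gal_var s : diff_gal D iota z s -> s z = z.
Proof. by case=> _ [_ [_ [_ [_ []]]]]. Qed.

End DifferentialGaloisGroup.

Section GaloisAction.

Variables (R : realType) (m : nat) (L : fieldType) (D : L -> L).
Variables (iota : {rmorphism R[i] -> L}) (z : L) (s : L -> L).
Hypotheses (derD : derivation D) (Dz : D z = 1) (gal_s : diff_gal D iota z s).
Hypothesis consts_in_iota : forall x, D x = 0 -> exists c, x = iota c.

#[local] HB.instance Definition _ :=
  GRing.isZmodMorphism.Build L L s (diff_gal_zmod_morphism gal_s).
#[local] HB.instance Definition _ :=
  GRing.isMonoidMorphism.Build L L s (diff_gal_monoid_morphism gal_s).

Local Notation sol := (ode2_sol D (coef_a z) (coef_b m z)).
Local Notation W := (wronskian D).

Lemma gal_fix_const x : D x = 0 -> s x = x.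
Proof. by move=> /consts_in_iota [c ->]; apply: diff_gal_iota gal_s. Qed.

Lemma gal_fix_affine a b r x : D a = 0 -> D b = 0 -> s r = r ->
  s (a * r + b * x) = a * r + b * s x.
Proof.
move=> /gal_fix_const Da /gal_fix_const Db fix_r.
by rewrite rmorphD !rmorphM /= Da Db fix_r.
Qed.

Lemma gal_fix_horner_inv_subr1 q :
  s (map_poly iota q).[(z - 1)^-1] = (map_poly iota q).[(z - 1)^-1].
Proof.
have fix_iota c : s (iota c) = iota c := diff_gal_iota c gal_s.
rewrite -horner_map /= -map_poly_comp (eq_map_poly fix_iota).
by rewrite fmorphV rmorphB rmorph1 /= (diff_gal_var gal_s).
Qed.

Lemma gal_ode2_sol y : sol y -> sol (s y).
Proof.
have fix_a : s (coef_a z) = coef_a z.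
  rewrite /coef_a !(rmorphD, rmorphN, fmorph_div, rmorph1, rmorph_nat) /=.
  by rewrite (diff_gal_var gal_s).
have fix_b : s (coef_b m z) = coef_b m z.
  rewrite /coef_b /kcoef.
  rewrite !(rmorphD, rmorphN, rmorphB, fmorph_div, rmorphM, fmorphV, rmorphXn).
  by rewrite !(rmorph1, rmorph_nat) /= (diff_gal_var gal_s).
rewrite /ode2_sol => sol_y.
rewrite -(diff_galD y gal_s) -(diff_galD (D y) gal_s) -fix_a -fix_b.
by rewrite -!rmorphM -!rmorphD sol_y rmorph0.
Qed.

Lemma gal_wronskian f g : s (W f g) = W (s f) (s g).
Proof. by rewrite /wronskian rmorphB !rmorphM /= !(diff_galD _ gal_s). Qed.

Lemma gal_fix_wronskian f g : sol f -> sol g -> s (W f g) = W f g.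
Proof.
move=> sol_f sol_g; have [z_neq0 z1_neq0] := var_nonsingular derD Dz.
set w := (z ^+ 2 * (z - 1))^-1.
have w_neq0 : w != 0 by rewrite invr_eq0 mulf_neq0 ?expf_neq0.
have Dw : D w = - coef_a z * w := abel_rational_sol derD Dz.
have Dratio : D (W f g / w) = 0.
  exact: derivation_div_eq0 (wronskian_abel derD sol_f sol_g) Dw w_neq0.
have fix_w : s w = w.
  by rewrite fmorphV rmorphM rmorphXn rmorphB rmorph1 /= (diff_gal_var gal_s).
by rewrite -(divfK w_neq0 (W f g)) rmorphM /= fix_w (gal_fix_const Dratio).
Qed.

Lemma gal_shift r y : sol r -> sol y -> s r = r -> W r y != 0 ->
  exists2 l, D l = 0 & s y = l * r + y.
Proof.
move=> sol_r sol_y fix_r W_neq0.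
have [sy_decomp Dl _] :=
  ode2_sol_decomp derD (gal_ode2_sol sol_y) sol_r sol_y W_neq0.
exists (W (s y) y / W r y) => //; rewrite {1}sy_decomp; congr (_ + _).
by rewrite -{1}fix_r -gal_wronskian gal_fix_wronskian // divff // mul1r.
Qed.

End GaloisAction.

Section GaloisGroupAbelian.

Variables (R : realType) (m : nat) (L : fieldType) (D : L -> L).
Variables (iota : {rmorphism R[i] -> L}) (z y1 y2 : L).
Hypothesis pv : picard_vessiot m D iota z y1 y2.

Local Notation sol := (ode2_sol D (coef_a z) (coef_b m z)).
Local Notation W := (wronskian D).

Let derD : derivation D := pv.1.
Let Diota : forall c, D (iota c) = 0 := pv.2.1.
Let consts_in_iota : forall x, D x = 0 -> exists c, x = iota c := pv.2.2.1.
Let Dz : D z = 1 := pv.2.2.2.1.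
Let sol_y1 : sol y1 := pv.2.2.2.2.1 y1 (or_introl erefl).
Let sol_y2 : sol y2 := pv.2.2.2.2.1 y2 (or_intror erefl).

Let W12_neq0 : W y1 y2 != 0 := pv.2.2.2.2.2.1.
Let generated := pv.2.2.2.2.2.2.

Let r := (map_poly iota (sol_poly R[i] (m + 2))).[(z - 1)^-1].
Let sol_r : sol r := sol_poly_ode2_sol derD Dz m Diota.

Lemma exists_wronskian_partner : exists2 y, sol y & W r y != 0.
Proof.
have [W1|W2] := wronskian_neq0_r (sol_poly_neq0 derD Dz m Diota) W12_neq0.
  by exists y1.
by exists y2.
Qed.

Variables s t : L -> L.
Hypotheses (gal_s : diff_gal D iota z s) (gal_t : diff_gal D iota z t).

#[local] HB.instance Definition _ :=
  GRing.isZmodMorphism.Build L L s (diff_gal_zmod_morphism gal_s).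
#[local] HB.instance Definition _ :=
  GRing.isMonoidMorphism.Build L L s (diff_gal_monoid_morphism gal_s).
#[local] HB.instance Definition _ :=
  GRing.isZmodMorphism.Build L L t (diff_gal_zmod_morphism gal_t).
#[local] HB.instance Definition _ :=
  GRing.isMonoidMorphism.Build L L t (diff_gal_monoid_morphism gal_t).

Lemma gal_commute_sol f : sol f -> s (t f) = t (s f).
Proof.
have [y sol_y W_neq0] := exists_wronskian_partner.
have fix_r g : diff_gal D iota z g -> g r = r.
  by move=> gal_g; apply: (gal_fix_horner_inv_subr1 gal_g).
have shift g : diff_gal D iota z g -> exists2 l, D l = 0 & g y = l * r + y.
  move=> gal_g; have fix_rg := fix_r g gal_g.
  exact: (gal_shift derD Dz gal_g consts_in_iota sol_r sol_y fix_rg W_neq0).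
have [ls Dls sy] := shift s gal_s; have [lt Dlt ty] := shift t gal_t.
have affine g a b x : diff_gal D iota z g -> D a = 0 -> D b = 0 ->
    g (a * r + b * x) = a * r + b * g x.
  move=> gal_g Da Db; have fix_rg := fix_r g gal_g.
  exact: (gal_fix_affine gal_g consts_in_iota x Da Db fix_rg).
have D1 : D 1 = 0 := derivation1 derD.
have sty : s (t y) = t (s y).
  have := affine s lt 1 y gal_s Dlt D1; have := affine t ls 1 y gal_t Dls D1.
  rewrite !mul1r -sy -ty => t_sy s_ty.
  by rewrite s_ty t_sy sy ty addrCA.
move=> sol_f.
have [f_decomp Da Db] := ode2_sol_decomp derD sol_f sol_r sol_y W_neq0.
rewrite [in LHS]f_decomp [in RHS]f_decomp.
by rewrite (affine t) // (affine s) // (affine s) // (affine t) // sty.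
Qed.

Lemma diff_gal_commute : forall x, s (t x) = t (s x).
Proof.
have commD y : s (t y) = t (s y) -> s (t (D y)) = t (s (D y)).
  move=> sty; rewrite (diff_galD y gal_t) (diff_galD (t y) gal_s) sty.
  by rewrite (diff_galD y gal_s) (diff_galD (s y) gal_t).
apply: (@rmorph_commute_generated L _ _ _ generated) => /=.
move=> _ [[c ->]|[->|[->|[->|[->|->]]]]].
- by rewrite !(diff_gal_iota c gal_t, diff_gal_iota c gal_s).
- by rewrite !(diff_gal_var gal_t, diff_gal_var gal_s).
- exact: gal_commute_sol.
- exact: gal_commute_sol.
- exact/commD/gal_commute_sol.
- exact/commD/gal_commute_sol.
Qed.

End GaloisGroupAbelian.

Theorem lemma3 (R : realType) (m : nat) (L : fieldType) (D : L -> L)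
    (iota : {rmorphism R[i] -> L}) (z y1 y2 : L) :
  picard_vessiot m D iota z y1 y2 ->
  abelian_maps (gal_identity_component D iota z y1 y2).
Proof.
move=> pv s t [Hs [Hs_gal _ _ Hs_s]] [Ht [Ht_gal _ _ Ht_t]].
exact: (diff_gal_commute pv (Hs_gal s Hs_s) (Ht_gal t Ht_t)).
Qed.
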